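(* Under the standing assumptions below, let $\gamma>0$ and let $\{(y^t,z^t,x^t)\}$ be generated by the PR splitting iteration. Then there exists $\kappa>0$ (depending only on $\gamma$ and $L$) such that for all $t\ge1$, \[ \operatorname{dist}\big(0,\partial\mathcal{P}_\gamma(y^t,z^t,x^t)\big)\le\kappa\|y^{t+1}-y^t\| . \]
   Context: Standing assumptions: $f:\mathbb{R}^n\to\mathbb{R}$ is differentiable and strongly convex with modulus at least $\sigma>0$, and $\nabla f$ is Lipschitz continuous with modulus at most $L>0$. The function $g:\mathbb{R}^n\to(-\infty,\infty]$ is proper and lower semicontinuous, and for the $\gamma>0$ used, $\operatorname{Argmin}_u\{\gamma g(u)+\frac12\|u-w\|^2\}$ is nonempty for every $w\in\mathbb{R}^n$. PR splitting iteration: given $x^0$ and $\gamma>0$, for $t=0,1,2,\dots$: $y^{t+1}=\operatorname{argmin}_y\{f(y)+\frac{1}{2\gamma}\|y-x^t\|^2\}$; $z^{t+1}\in\operatorname{Argmin}_z\{g(z)+\frac{1}{2\gamma}\|2y^{t+1}-x^t-z\|^2\}$; $x^{t+1}=x^t+2(z^{t+1}-y^{t+1})$. Merit function: $\mathcal{P}_\gamma(y,z,x):=f(y)+g(z)-\frac{3}{2\gamma}\|y-z\|^2+\frac{1}{\gamma}\langle x-y,z-y\rangle$, regarded as a function on $\mathbb{R}^n\times\mathbb{R}^n\times\mathbb{R}^n$; $\partial\mathcal{P}_\gamma$ is its limiting subdifferential: $v\in\partial h(x)$ iff there exist $x^t\to x$ with $h(x^t)\to h(x)$ and $v^t\to v$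 such that $\liminf_{z\to x^t, z\ne x^t}\frac{h(z)-h(x^t)-\langle v^t,z-x^t\rangle}{\|z-x^t\|}\ge0$ for each $t$. *)

From Stdlib Require Import Reals Lra.
From mathcomp Require Import all_boot.
Set Implicit Arguments. Unset Strict Implicit. Unset Printing Implicit Defensive.
Open Scope R_scope.

Definition vec (n : nat) := 'I_n -> R.
Definition vadd n (x y : vec n) : vec n := fun i => x i + y i.
Definition vsub n (x y : vec n) : vec n := fun i => x i - y i.
Definition vscal n (a : R) (x : vec n) : vec n := fun i => a * x i.
Definition vzero n : vec n := fun _ => 0.
Definition inner n (x y : vec n) : R := \big[Rplus/0]_(i < n) (x i * y i).
Definition norm n (x : vec n) : R := sqrt (inner x x).

Inductive ER := Fin (r : R) | PInf.
Definition ER_le (a b : ER) : Prop :=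
  match a, b with
  | _, PInf => True
  | PInf, Fin _ => False
  | Fin x, Fin y => x <= y
  end.
Definition ER_gt (e : ER) (r : R) : Prop :=
  match e with Fin a => r < a | PInf => True end.
Definition ER_addR (e : ER) (r : R) : ER :=
  match e with Fin a => Fin (a + r) | PInf => PInf end.
Definition ER_scal (c : R) (e : ER) : ER :=
  match e with Fin a => Fin (c * a) | PInf => PInf end.

Definition has_gradient n (f : vec n -> R) (gf : vec n -> vec n) : Prop :=
  forall x eps, 0 < eps -> exists delta, 0 < delta /\
    forall z, norm (vsub z x) < delta ->
      Rabs (f z - f x - inner (gf x) (vsub z x)) <= eps * norm (vsub z x).

Definition strongly_convex n (f : vec n -> R) (sigma : R) : Prop :=
  forall x y lam, 0 <= lam <= 1 ->
    f (vadd (vscal lam x) (vscal (1 - lam) y))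
      <= lam * f x + (1 - lam) * f y
         - sigma / 2 * lam * (1 - lam) * (norm (vsub x y)) ^ 2.

Definition lipschitz n (F : vec n -> vec n) (L : R) : Prop :=
  forall x y, norm (vsub (F x) (F y)) <= L * norm (vsub x y).

Definition proper_ER n (g : vec n -> ER) : Prop := exists x r, g x = Fin r.
Definition lsc n (g : vec n -> ER) : Prop :=
  forall x r, ER_gt (g x) r -> exists delta, 0 < delta /\
    forall z, norm (vsub z x) < delta -> ER_gt (g z) r.

Definition is_argmin n (h : vec n -> ER) (u : vec n) : Prop :=
  forall u', ER_le (h u) (h u').
Definition is_argminR n (h : vec n -> R) (u : vec n) : Prop :=
  forall u', h u <= h u'.

Definition prox_obj n (g : vec n -> ER) (gamma : R) (w : vec n) (u : vec n) : ER :=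
  ER_addR (ER_scal gamma (g u)) (/ 2 * (norm (vsub u w)) ^ 2).

Definition PR_iter n (f : vec n -> R) (g : vec n -> ER) (gamma : R)
    (y z x : nat -> vec n) : Prop :=
  forall t,
    is_argminR (fun v => f v + / (2 * gamma) * (norm (vsub v (x t))) ^ 2) (y t.+1)
    /\ is_argmin (fun w => ER_addR (g w)
           (/ (2 * gamma) * (norm (vsub (vsub (vscal 2 (y t.+1)) (x t)) w)) ^ 2))
         (z t.+1)
    /\ x t.+1 = vadd (x t) (vscal 2 (vsub (z t.+1) (y t.+1))).

Definition trip n := (vec n * vec n * vec n)%type.
Definition tsub n (a b : trip n) : trip n :=
  (vsub a.1.1 b.1.1, vsub a.1.2 b.1.2, vsub a.2 b.2).
Definition tinner n (a b : trip n) : R :=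
  inner a.1.1 b.1.1 + inner a.1.2 b.1.2 + inner a.2 b.2.
Definition tnorm n (a : trip n) : R := sqrt (tinner a a).

Definition tconv n (s : nat -> trip n) (a : trip n) : Prop :=
  forall eps, 0 < eps -> exists N, forall k, (N <= k)%nat -> tnorm (tsub (s k) a) < eps.
Definition Rconv (s : nat -> R) (a : R) : Prop :=
  forall eps, 0 < eps -> exists N, forall k, (N <= k)%nat -> Rabs (s k - a) < eps.

(** Frechet (regular) subgradient at a point of the domain:
    liminf_{w -> p, w <> p} (h w - h p - <v, w - p>) / ||w - p|| >= 0 *)
Definition frechet_subgrad n (h : trip n -> ER) (p v : trip n) : Prop :=
  exists hp, h p = Fin hp /\
  forall eps, 0 < eps -> exists delta, 0 < delta /\
    forall w, 0 < tnorm (tsub w p) < delta ->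
      ER_le (Fin (hp + tinner v (tsub w p) - eps * tnorm (tsub w p))) (h w).

Definition limiting_subgrad n (h : trip n -> ER) (p v : trip n) : Prop :=
  exists (ps vs : nat -> trip n) (hps : nat -> R) (hp : R),
    h p = Fin hp /\
    tconv ps p /\ (forall k, h (ps k) = Fin (hps k)) /\ Rconv hps hp /\
    tconv vs v /\ (forall k, frechet_subgrad h (ps k) (vs k)).

(** dist(0, S) <= c, with inf over the empty set = +oo *)
Definition dist0_le n (S : trip n -> Prop) (c : R) : Prop :=
  forall eps, 0 < eps -> exists v, S v /\ tnorm v <= c + eps.

Definition Pgamma n (f : vec n -> R) (g : vec n -> ER) (gamma : R) (p : trip n) : ER :=
  let y := p.1.1 in let z := p.1.2 in let x := p.2 in
  ER_addR (g z)
    (f y - 3 / (2 * gamma) * (norm (vsub y z)) ^ 2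
         + / gamma * inner (vsub x y) (vsub z y)).

From HB Require Import structures.
From Stdlib Require Import Reals Lra FunctionalExtensionality.
From mathcomp Require Import ssreflect ssrfun.
From mathcomp Require all_boot.

(* The y-update gives grad f(y^{t+1}) = (x^t - y^{t+1}) / gamma.  At the iterate
   (y, z, x) = (y^t, z^t, x^t) this makes the y-partial derivative of P_gamma vanish,
   and the prox inequality of the z-update, combined with the quadratic coupling
   terms of P_gamma, shows that v = (0, 2 (y - z) / gamma, (z - y) / gamma) is a
   Frechet, hence limiting, subgradient of P_gamma.  Subtracting the gradient
   identities at t and t + 1 gives
     2 (z^t - y^t) = gamma (grad f(y^{t+1}) - grad f(y^t)) + (y^{t+1} - y^t),
   so ||y^t - z^t|| is controlled by (gamma L + 1) ||y^{t+1} - y^t||, and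
   ||v|| = sqrt 5 ||y^t - z^t|| / gamma gives kappa = 2 (gamma L + 1) / gamma. *)

Set Implicit Arguments. Unset Strict Implicit.
Open Scope R_scope.

(* all_boot is imported only locally: its nat notations would change how the
   statement of mainTheorem5 is parsed. *)
Module InnerSum.
Import all_boot.

HB.instance Definition _ := Monoid.isComLaw.Build R 0 Rplus
  (fun a b c => esym (Rplus_assoc a b c)) Rplus_comm Rplus_0_l.

Lemma innerC n (a b : vec n) : inner a b = inner b a.
Proof. by rewrite /inner; apply: eq_bigr => i _; rewrite Rmult_comm. Qed.

Lemma innerDl n (a b c : vec n) : inner (vadd a b) c = inner a c + inner b c.
Proof. by rewrite /inner -big_split; apply: eq_bigr => i _; rewrite Rmult_plus_distr_r. Qed.

Lemma innerZl n r (a b : vec n) : inner (vscal r a) b = r * inner a b.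
Proof. by rewrite /inner /vscal; elim/big_rec2: _ => [|i u v _ ->]; ring. Qed.

Lemma inner_self_ge0 n (a : vec n) : 0 <= inner a a.
Proof. by apply: (big_ind (Rle 0)) => [|u v|i _]; [lra | lra | nra]. Qed.

Lemma inner_self_eq0 n (a : vec n) : inner a a = 0 -> a = @vzero n.
Proof.
move=> a0; apply: functional_extensionality => i; rewrite /vzero.
move: a0; rewrite /inner (bigD1 i) //=.
have : 0 <= \big[Rplus/0]_(j < n | j != i) (a j * a j).
  by apply: (big_ind (Rle 0)) => [|u v|j _]; [lra | lra | nra].
have := Rle_0_sqr (a i); rewrite /Rsqr => sq_ai others0 sum0.
have aii0 := Rplus_eq_0_l _ _ sq_ai others0 sum0.
by case: (Rmult_integral _ _ aii0).
Qed.

End InnerSum.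
Import InnerSum.

Ltac vec_ext := apply: functional_extensionality => ?; unfold vadd, vsub, vscal, vzero; ring.

Lemma vsubE n (a b : vec n) : vsub a b = vadd a (vscal (-1) b).
Proof. by vec_ext. Qed.

Lemma innerBl n (a b c : vec n) : inner (vsub a b) c = inner a c - inner b c.
Proof. by rewrite vsubE innerDl innerZl; ring. Qed.

Lemma innerDr n (a b c : vec n) : inner a (vadd b c) = inner a b + inner a c.
Proof. by rewrite innerC innerDl !(innerC a). Qed.

Lemma innerBr n (a b c : vec n) : inner a (vsub b c) = inner a b - inner a c.
Proof. by rewrite innerC innerBl !(innerC a). Qed.

Lemma innerZr n r (a b : vec n) : inner a (vscal r b) = r * inner a b.
Proof. by rewrite innerC innerZl innerC. Qed.

Lemma inner0l n (a : vec n) : inner (@vzero n) a = 0.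
Proof.
have -> : @vzero n = vscal 0 (@vzero n) by vec_ext.
by rewrite innerZl; ring.
Qed.

Lemma sqr_norm n (a : vec n) : norm a ^ 2 = inner a a.
Proof. by rewrite /norm pow2_sqrt //; apply: inner_self_ge0. Qed.

Lemma norm_ge0 n (a : vec n) : 0 <= norm a.
Proof. exact: sqrt_pos. Qed.

Lemma normZ n r (a : vec n) : norm (vscal r a) = Rabs r * norm a.
Proof.
rewrite /norm innerZl innerZr -Rmult_assoc sqrt_mult_alt; last exact: Rle_0_sqr.
by rewrite -sqrt_Rsqr_abs.
Qed.

Lemma norm_vsubC n (a b : vec n) : norm (vsub a b) = norm (vsub b a).
Proof.
have -> : vsub a b = vscal (-1) (vsub b a) by vec_ext.
by rewrite normZ Rabs_Ropp Rabs_R1 Rmult_1_l.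
Qed.

(* vsub a b unfolds to vadd a (fun i => - b i), so the vsub rules must be tried
   before the vadd rules. *)
Ltac inner_expand :=
  repeat first [ rewrite innerBl | rewrite innerBr | rewrite innerDl | rewrite innerDr
               | rewrite innerZl | rewrite innerZr | rewrite inner0l ].

(* Orient each pair inner a b / inner b a one way, so that symmetry is available
   to lra and ring even under scalar factors. *)
Ltac inner_canon :=
  repeat match goal with
  | |- context [inner ?a ?b] =>
      match goal with
      | |- context [inner b a] =>
          tryif constr_eq a b then fail else rewrite (innerC b a)
      end
  end.

Ltac inner_normalize := rewrite ?sqr_norm; inner_expand; inner_canon.

Lemma sqr_norm_add_le n (a b : vec n) :
  norm (vadd a b) ^ 2 <= 2 * norm a ^ 2 + 2 * norm b ^ 2.
Proof. by have := inner_self_ge0 (vsub a b); inner_normalize; lra. Qed.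

Definition tadd n (a b : trip n) : trip n :=
  (vadd a.1.1 b.1.1, vadd a.1.2 b.1.2, vadd a.2 b.2).

Lemma tadd_tsub n (p w : trip n) : tadd p (tsub w p) = w.
Proof. by case: w => [[wy wz] wx]; rewrite /tadd /tsub /=; congr (_, _, _); vec_ext. Qed.

Lemma tinner_self_ge0 n (d : trip n) : 0 <= tinner d d.
Proof.
by rewrite /tinner; have := inner_self_ge0 d.1.1; have := inner_self_ge0 d.1.2;
  have := inner_self_ge0 d.2; lra.
Qed.

Lemma sqr_tnorm n (d : trip n) :
  tnorm d ^ 2 = norm d.1.1 ^ 2 + norm d.1.2 ^ 2 + norm d.2 ^ 2.
Proof.
rewrite /tnorm pow2_sqrt; last exact: tinner_self_ge0.
by rewrite !sqr_norm.
Qed.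

Lemma norm_le_tnorm n (d : trip n) : norm d.1.1 <= tnorm d.
Proof.
apply: sqrt_le_1_alt; rewrite /tinner.
by have := inner_self_ge0 d.1.2; have := inner_self_ge0 d.2; lra.
Qed.

Lemma tconv_cst n (p : trip n) : tconv (fun _ => p) p.
Proof.
move=> eps eps0; exists 0%nat => _ _.
have -> : tsub p p = (@vzero n, @vzero n, @vzero n) by rewrite /tsub; congr (_, _, _); vec_ext.
by rewrite /tnorm /tinner /= !inner0l !Rplus_0_r sqrt_0.
Qed.

Lemma frechet_subgrad_limiting n (h : trip n -> ER) p v :
  frechet_subgrad h p v -> limiting_subgrad h p v.
Proof.
move=> hv; have [hp [hpE _]] := hv.
exists (fun _ => p), (fun _ => v), (fun _ => hp), hp.
split=> //; split; first exact: tconv_cst.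
split=> //; split; first by move=> eps eps0; exists 0%nat => _ _; rewrite Rminus_diag Rabs_R0.
by split; first exact: tconv_cst.
Qed.

Lemma frechet_subgrad_intro n (h : trip n -> ER) p v hp :
  h p = Fin hp ->
  (forall eps, 0 < eps -> exists delta, 0 < delta /\
     forall d, tnorm d < delta ->
       ER_le (Fin (hp + tinner v d - eps * tnorm d)) (h (tadd p d))) ->
  frechet_subgrad h p v.
Proof.
move=> hpE model; exists hp; split=> // eps /model[delta [delta0 near]].
by exists delta; split=> // w [_ /near]; rewrite tadd_tsub.
Qed.

Lemma vsub_vadd n (y d : vec n) : vsub (vadd y d) y = d.
Proof. by vec_ext. Qed.

Lemma has_gradient_vadd n (f : vec n -> R) gf y eps :
  has_gradient f gf -> 0 < eps -> exists delta, 0 < delta /\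
    forall d, norm d < delta ->
      f y + inner (gf y) d - eps * norm d <= f (vadd y d) <= f y + inner (gf y) d + eps * norm d.
Proof.
move=> grad /(grad y)[delta [delta0 near]]; exists delta; split=> // d d_lt.
have := near (vadd y d); rewrite vsub_vadd => /(_ d_lt).
have := Rle_abs (f (vadd y d) - f y - inner (gf y) d).
have := Rle_abs (- (f (vadd y d) - f y - inner (gf y) d)); rewrite Rabs_Ropp.
lra.
Qed.

Lemma prox_residual_small n (f : vec n -> R) gf gamma (x y : vec n) eps :
  has_gradient f gf -> 0 < gamma -> 0 < eps ->
  is_argminR (fun v => f v + / (2 * gamma) * norm (vsub v x) ^ 2) y ->
  let e := vsub (gf y) (vscal (/ gamma) (vsub x y)) in
  3 / 4 * norm e ^ 2 <= eps * norm e.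
Proof.
(* Test the minimality of y against y - s e for a small s > 0: with the gradient
   inequality this gives s ||e||^2 <= eps s ||e|| + s^2 ||e||^2 / (2 gamma). *)
move=> grad gamma0 eps0 ymin e.
have gfE : gf y = vadd e (vscal (/ gamma) (vsub x y)) by rewrite /e; vec_ext.
clearbody e.
have [delta [delta0 approx]] := has_gradient_vadd y grad eps0.
have N0 := norm_ge0 e.
pose s := Rmin (gamma / 2) (delta / (2 * (norm e + 1))).
have s0 : 0 < s by apply: Rmin_pos; [lra | apply: Rdiv_lt_0_compat; lra].
have s_gamma : s <= gamma / 2 := Rmin_l _ _.
have sN : s * norm e < delta.
  have : s <= delta / (2 * (norm e + 1)) := Rmin_r _ _.
  have : delta / (2 * (norm e + 1)) * (2 * (norm e + 1)) = delta by field; lra.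
  by nra.
clearbody s.
have norm_d : norm (vscal (- s) e) = s * norm e.
  by rewrite normZ Rabs_Ropp Rabs_pos_eq //; lra.
have := approx (vscal (- s) e); rewrite norm_d => /(_ sN) [_ upper].
have lower := ymin (vadd y (vscal (- s) e)).
have lin : inner (gf y) (vscal (- s) e)
    = - s * norm e ^ 2 - s * / gamma * inner (vsub x y) e.
  by rewrite gfE; inner_normalize; lra.
have quad : norm (vsub (vadd y (vscal (- s) e)) x) ^ 2
    = norm (vsub y x) ^ 2 + 2 * s * inner (vsub x y) e + s * s * norm e ^ 2.
  by inner_normalize; ring.
rewrite Rinv_mult in lower.
have descent : s * norm e ^ 2 <= s * (eps * norm e) + s * (s / 2 * / gamma) * norm e ^ 2.
  by move: lower upper; rewrite lin quad; nra.
have coef : s / 2 * / gamma <= / 4.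
  have := Rinv_r gamma (Rgt_not_eq _ _ gamma0); have := Rinv_0_lt_compat _ gamma0; nra.
apply: (Rmult_le_reg_l s) => //.
by have := pow2_ge_0 (norm e); nra.
Qed.

Lemma prox_argmin_gradient n (f : vec n -> R) gf gamma (x y : vec n) :
  has_gradient f gf -> 0 < gamma ->
  is_argminR (fun v => f v + / (2 * gamma) * norm (vsub v x) ^ 2) y ->
  gf y = vscal (/ gamma) (vsub x y).
Proof.
move=> grad gamma0 ymin.
have small eps (eps0 : 0 < eps) := prox_residual_small grad gamma0 eps0 ymin.
move: small; set e := vsub (gf y) _ => small.
have e0 : norm e = 0.
  case: (Rle_lt_or_eq_dec _ _ (norm_ge0 e)) => // e_pos.
  by have := small (norm e / 2) ltac:(lra); nra.
have /inner_self_eq0 e_zero : inner e e = 0 by rewrite -sqr_norm e0; ring.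
apply: functional_extensionality => i; have := f_equal (fun v => v i) e_zero.
by rewrite /e /vsub /vscal /vzero; lra.
Qed.

Lemma PR_step_residual n (gf : vec n -> vec n) gamma (Xp Y Z Y' : vec n) :
  0 < gamma ->
  gf Y = vscal (/ gamma) (vsub Xp Y) ->
  gf Y' = vscal (/ gamma) (vsub (vadd Xp (vscal 2 (vsub Z Y))) Y') ->
  vscal 2 (vsub Z Y) = vadd (vscal gamma (vsub (gf Y') (gf Y))) (vsub Y' Y).
Proof.
move=> gamma0 gfY gfY'; rewrite gfY gfY'.
apply: functional_extensionality => i; unfold vadd, vsub, vscal; field; lra.
Qed.

Lemma sqr_norm_PR_step_le n (gf : vec n -> vec n) gamma L (Xp Y Z Y' : vec n) :
  0 < gamma -> lipschitz gf L ->
  gf Y = vscal (/ gamma) (vsub Xp Y) ->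
  gf Y' = vscal (/ gamma) (vsub (vadd Xp (vscal 2 (vsub Z Y))) Y') ->
  norm (vsub Y Z) ^ 2 <= ((gamma * L) ^ 2 + 1) / 2 * norm (vsub Y' Y) ^ 2.
Proof.
move=> gamma0 lip gfY gfY'.
have := sqr_norm_add_le (vscal gamma (vsub (gf Y') (gf Y))) (vsub Y' Y).
rewrite -(PR_step_residual gamma0 gfY gfY') !normZ !Rabs_pos_eq; try lra.
have grad_diff : norm (vsub (gf Y') (gf Y)) ^ 2 <= (L * norm (vsub Y' Y)) ^ 2.
  by apply: pow_incr; split; [exact: norm_ge0 | exact: lip].
have := Rmult_le_compat_l (gamma ^ 2) _ _ (pow2_ge_0 gamma) grad_diff.
by rewrite (norm_vsubC Z Y); lra.
Qed.

Definition PR_subgrad n gamma (Y Z : vec n) : trip n :=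
  (@vzero n, vscal (2 / gamma) (vsub Y Z), vscal (/ gamma) (vsub Z Y)).

Lemma sqr_tnorm_PR_subgrad n gamma (Y Z : vec n) : 0 < gamma ->
  tnorm (PR_subgrad gamma Y Z) ^ 2 = 5 / gamma ^ 2 * norm (vsub Y Z) ^ 2.
Proof.
move=> gamma0; have := Rinv_0_lt_compat _ gamma0 => inv_gamma0.
rewrite sqr_tnorm /= !normZ (norm_vsubC Z Y) !Rabs_pos_eq /Rdiv; try nra.
have -> : norm (@vzero n) = 0 by rewrite /norm inner0l sqrt_0.
by field; lra.
Qed.

Lemma tnorm_PR_subgrad_le n (gf : vec n -> vec n) gamma L (Xp Y Z Y' : vec n) :
  0 < gamma -> 0 <= L -> lipschitz gf L ->
  gf Y = vscal (/ gamma) (vsub Xp Y) ->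
  gf Y' = vscal (/ gamma) (vsub (vadd Xp (vscal 2 (vsub Z Y))) Y') ->
  tnorm (PR_subgrad gamma Y Z) <= 2 * (gamma * L + 1) / gamma * norm (vsub Y' Y).
Proof.
move=> gamma0 L0 lip gfY gfY'.
have D0 := norm_ge0 (vsub Y' Y).
apply: Rsqr_incr_0_var; last by apply: Rmult_le_pos => //; apply/Rlt_le/Rdiv_lt_0_compat; nra.
rewrite !Rsqr_pow2 sqr_tnorm_PR_subgrad // /Rdiv.
have k0 : 0 <= / gamma ^ 2 by apply/Rlt_le/Rinv_0_lt_compat/pow_lt.
have coef : 5 * (((gamma * L) ^ 2 + 1) / 2) <= 4 * (gamma * L + 1) ^ 2.
  by have := Rmult_le_pos _ _ (Rlt_le _ _ gamma0) L0; nra.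
have := Rmult_le_compat_l _ _ _ k0 (sqr_norm_PR_step_le gamma0 lip gfY gfY').
have := Rmult_le_compat_r _ _ _ (Rmult_le_pos _ _ k0 (pow2_ge_0 (norm (vsub Y' Y)))) coef.
have -> : (2 * (gamma * L + 1) * / gamma * norm (vsub Y' Y)) ^ 2
    = 4 * (gamma * L + 1) ^ 2 * / gamma ^ 2 * norm (vsub Y' Y) ^ 2 by field; lra.
lra.
Qed.

(* gamma times the increment of P_gamma from (Y, Z, X) along (dy, dz, dx), with g
   replaced by its lower model from the prox inequality and f by its linearization,
   minus gamma <v, d>: the first-order terms cancel. *)
Lemma PR_merit_increment_ge n (Xp Y Z dy dz dx : vec n) :
  let a := vsub (vscal 2 Y) Xp in
  let X := vadd Xp (vscal 2 (vsub Z Y)) in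
  - 5 * (norm dy ^ 2 + norm dz ^ 2 + norm dx ^ 2)
  <= (norm (vsub a Z) ^ 2 - norm (vsub a (vadd Z dz)) ^ 2) / 2 + inner (vsub Xp Y) dy
     - 3 / 2 * (norm (vsub (vadd Y dy) (vadd Z dz)) ^ 2 - norm (vsub Y Z) ^ 2)
     + (inner (vsub (vadd X dx) (vadd Y dy)) (vsub (vadd Z dz) (vadd Y dy))
        - inner (vsub X Y) (vsub Z Y))
     - (2 * inner (vsub Y Z) dz + inner (vsub Z Y) dx).
Proof.
have := inner_self_ge0 (vadd dy dz); have := inner_self_ge0 (vadd dx dy).
have := inner_self_ge0 (vadd (vsub dx dy) (vsub dz dy)).
have := inner_self_ge0 dx; have := inner_self_ge0 dy; have := inner_self_ge0 dz.
by cbv zeta; inner_normalize; lra.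
Qed.

Lemma Pgamma_frechet_subgrad n (f : vec n -> R) gf (g : vec n -> ER) gamma
    (Xp Y Z : vec n) gZ :
  has_gradient f gf -> 0 < gamma ->
  gf Y = vscal (/ gamma) (vsub Xp Y) ->
  is_argmin (fun w => ER_addR (g w)
    (/ (2 * gamma) * norm (vsub (vsub (vscal 2 Y) Xp) w) ^ 2)) Z ->
  g Z = Fin gZ ->
  frechet_subgrad (Pgamma f g gamma) (Y, Z, vadd Xp (vscal 2 (vsub Z Y)))
    (PR_subgrad gamma Y Z).
Proof.
move=> grad gamma0 gfY zmin gZE.
have inv_gamma0 := Rinv_0_lt_compat _ gamma0.
apply: frechet_subgrad_intro; first by rewrite /Pgamma /= gZE.
move=> eps eps0; have eps2 : 0 < eps / 2 by lra.
have [delta [delta0 approx]] := has_gradient_vadd Y grad eps2.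
exists (Rmin delta (eps * gamma / 10)); split.
  by apply: Rmin_pos => //; nra.
move=> [[dy dz] dx] d_lt.
have [T_delta T_eps] : tnorm (dy, dz, dx) < delta /\ tnorm (dy, dz, dx) < eps * gamma / 10.
  by split; apply: (Rlt_le_trans _ _ _ d_lt); [apply: Rmin_l | apply: Rmin_r].
have dyT := norm_le_tnorm (dy, dz, dx); have T0 : 0 <= tnorm (dy, dz, dx) := sqrt_pos _.
have sqrT := sqr_tnorm (dy, dz, dx); rewrite /= in dyT sqrT.
have [f_lower _] := approx dy ltac:(lra).
rewrite gfY innerZl in f_lower.
rewrite /Pgamma /tadd /=.
case gWE : (g (vadd Z dz)) => [gW|] //=.
have := zmin (vadd Z dz); rewrite gZE gWE /= => g_lower.
have := PR_merit_increment_ge Xp Y Z dy dz dx; rewrite -sqrT => /=.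
move/(Rmult_le_compat_l _ _ _ (Rlt_le _ _ inv_gamma0)) => quad_lower.
have : / gamma * tnorm (dy, dz, dx) <= eps / 10.
  have -> : eps / 10 = / gamma * (eps * gamma / 10) by field; lra.
  by apply: Rmult_le_compat_l; lra.
rewrite /tinner /PR_subgrad /= inner0l !innerZl.
have -> : 3 / (2 * gamma) = 3 / 2 * / gamma by field; lra.
have -> : 2 / gamma = 2 * / gamma by field; lra.
rewrite Rinv_mult in g_lower.
nra.
Qed.

Lemma argmin_addR_finite n (g : vec n -> ER) (q : vec n -> R) z :
  proper_ER g -> is_argmin (fun w => ER_addR (g w) (q w)) z -> exists r, g z = Fin r.
Proof. by move=> [u [r gu]] /(_ u); rewrite gu; case: (g z) => [r'|] // _; exists r'. Qed.

Theorem mainTheorem5 :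
  forall (gamma L : R), 0 < gamma -> 0 < L ->
  exists kappa : R, 0 < kappa /\
  forall (n : nat) (f : vec n -> R) (gf : vec n -> vec n) (sigma : R)
         (g : vec n -> ER),
    has_gradient f gf ->
    0 < sigma -> strongly_convex f sigma ->
    lipschitz gf L ->
    proper_ER g -> lsc g ->
    (forall w : vec n, exists u, is_argmin (prox_obj g gamma w) u) ->
  forall (y z x : nat -> vec n),
    PR_iter f g gamma y z x ->
  forall t : nat, (1 <= t)%nat ->
    dist0_le (limiting_subgrad (Pgamma f g gamma) (y t, z t, x t))
             (kappa * norm (vsub (y (S t)) (y t))).
Proof.
move=> gamma L gamma0 L0.
exists (2 * (gamma * L + 1) / gamma); split; first by apply: Rdiv_lt_0_compat; nra.
move=> n f gf sigma g grad _ _ lip proper _ _ y z x iter [|t] t_pos; first by inversion t_pos.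
have [ymin [zmin xE]] := iter t; have [ymin' _] := iter (S t).
have gfY := prox_argmin_gradient grad gamma0 ymin.
have gfY' := prox_argmin_gradient grad gamma0 ymin'.
have [gZ gZE] := argmin_addR_finite proper zmin.
rewrite xE in gfY' *.
move=> eps eps0; exists (PR_subgrad gamma (y (S t)) (z (S t))); split.
  exact/frechet_subgrad_limiting/(Pgamma_frechet_subgrad grad gamma0 gfY zmin gZE).
by have := tnorm_PR_subgrad_le gamma0 (Rlt_le _ _ L0) lip gfY gfY'; lra.
Qed.
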